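(* Let $\kappa\ge2$ be a real number. Then $\lim_{\zeta\to0^+}\Upsilon_{\kappa,\zeta}=0$.
   Context: For real $\kappa\ge2$, $\mathcal{P}_\kappa$ is the set of all irreducible monic polynomials $p\in\mathbb{Z}[x]$ all of whose roots lie in $[-\kappa,\kappa]$. For real $\zeta>0$, $\mathbf{I}_{\kappa,\zeta}$ is the set of all closed intervals of length $\zeta$ contained in $[-\kappa,\kappa]$. For $p\in\mathcal{P}_\kappa$ and $I\in\mathbf{I}_{\kappa,\zeta}$ put $\Upsilon_\kappa(p,I)=\big(|\{\theta\in I:p(\theta)=0\}|-1\big)/\deg p$, and $\Upsilon_{\kappa,\zeta}=\sup\{\Upsilon_\kappa(p,I):p\in\mathcal{P}_\kappa,\ I\in\mathbf{I}_{\kappa,\zeta}\}$. *)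

From HB Require Import structures.
From mathcomp Require Import all_boot all_order all_algebra.
From mathcomp Require Import all_classical all_reals all_analysis.
From mathcomp Require Import complex.
Set Implicit Arguments. Unset Strict Implicit. Unset Printing Implicit Defensive.
Import Order.TTheory GRing.Theory Num.Theory.
Local Open Scope ring_scope.
Local Open Scope classical_set_scope.

Definition in_P (R : realType) (kappa : R) (p : {poly int}) : Prop :=
  [/\ p \is monic, irreducible_poly p &
      forall z : R[i], root (map_poly (fun c : int => (c%:~R : R[i])) p) z ->
        complex.Im z = 0 /\ - kappa <= complex.Re z <= kappa].

(* The closed interval [a, a + zeta] is in I_{kappa,zeta} *)
Definition in_I (R : realType) (kappa zeta a : R) : Prop :=
  - kappa <= a /\ a + zeta <= kappa.

(* Upsilon_kappa(p, [a, a+zeta]) = (#{theta in I : p(theta) = 0} - 1)/deg p,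
   the number of roots being the size of a duplicate-free list enumerating them *)
Definition Upsilon_pI (R : realType) (p : {poly int}) (a b : R) (u : R) : Prop :=
  exists s : seq R, [/\ uniq s,
    (forall t : R, t \in s <-> (a <= t <= b /\ (map_poly intr p).[t] = 0)) &
    u = ((size s)%:R - 1) / ((size p).-1)%:R].

Definition Upsilon_set (R : realType) (kappa zeta : R) : set R :=
  [set u | exists (p : {poly int}) (a : R),
     [/\ in_P kappa p, in_I kappa zeta a & Upsilon_pI p a (a + zeta) u]].

Definition Upsilon (R : realType) (kappa zeta : R) : R :=
  sup (Upsilon_set kappa zeta).

From HB Require Import structures.
From mathcomp Require Import all_boot all_order all_algebra.
From mathcomp Require Import all_classical all_reals all_analysis.
From mathcomp Require Import complex ring lra.
Import Order.TTheory GRing.Theory Num.Theory.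
Local Open Scope ring_scope.
Set Implicit Arguments. Unset Strict Implicit.

(* Let p be in P_kappa with roots x_1, ..., x_n, all real and in [-kappa, kappa].
   Since p is irreducible it is separable, and
   prod_(i <> j) (x_i - x_j) = prod_i p'(x_i) = det p'(C), C the companion matrix
   of p, is a nonzero integer.  If m of the roots lie in an interval of length
   zeta, this product is at most (2 kappa)^(n^2) zeta^(m (m - 1)) in absolute
   value, so (2 kappa)^(N^2) zeta < 1 forces N (m - 1) <= n, i.e.
   Upsilon_kappa(p, I) <= 1/N. *)

Lemma det_sub_scalar_mx (R : comNzRingType) n (A : 'M[R]_n) b :
  \det (A - b%:M) = (-1) ^+ n * (char_poly A).[b].
Proof.
rewrite -[(char_poly A).[b]]/(horner_eval b (char_poly A)) -det_map_mx -detZ.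
congr (\det _); apply/matrixP => i j; rewrite !mxE /horner_eval /= /horner_eval.
by rewrite hornerD hornerN hornerC hornerMn hornerX; ring.
Qed.

Lemma det_horner_mx (F : closedFieldType) n (A : 'M[F]_n.+1) (s : seq F)
    (q : {poly F}) :
  char_poly A = \prod_(a <- s) ('X - a%:P) ->
  \det (horner_mx A q) = \prod_(a <- s) q.[a].
Proof.
move=> charA; have size_s : size s = n.+1.
  by have := size_char_poly A; rewrite charA size_prod_XsubC => -[].
have [r ->] := closed_field_poly_normal q; set c := lead_coef q.
rewrite linearZ detZ rmorph_prod (big_morph _ (@det_mulmx F n.+1) (det1 _ _)) /=.
under eq_bigr do
  rewrite rmorphB /= horner_mx_X horner_mx_C det_sub_scalar_mx charA horner_prod.
under [RHS]eq_bigr do rewrite hornerZ horner_prod.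
rewrite [RHS]big_split /= big_const_seq iter_mulr_1 count_predT size_s; congr (_ * _).
rewrite exchange_big /=; apply: eq_bigr => b _.
rewrite -size_s -iter_mulr_1 -count_predT -(big_const_seq _ _ s predT) -big_split /=.
by apply: eq_bigr => a _; rewrite !hornerE; ring.
Qed.

Lemma prod_horner_roots_int (p q : {poly int}) : p \is monic -> (1 < size p)%N ->
  exists z : int, forall (F : closedFieldType) (s : seq F),
    map_poly intr p = \prod_(a <- s) ('X - a%:P) ->
    \prod_(a <- s) (map_poly intr q).[a] = z%:~R.
Proof.
move=> p_monic p_gt1.
have [d [C charC]] : {d : nat & {C : 'M[int]_d | char_poly C = p}}.
  by exists _, (companionmx p); exact: companionmxK.
case: d C charC => [|n] C charC.
  by move: p_gt1; rewrite -charC /char_poly det_mx00 size_poly1.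
exists (\det (horner_mx C q)) => F s p_split.
have charCF : char_poly (map_mx intr C) = \prod_(a <- s) ('X - a%:P).
  by rewrite -map_char_poly charC p_split.
by rewrite -(det_horner_mx _ charCF) -det_map_mx map_horner_mx.
Qed.

Lemma map_poly_real_complex_intr (R : rcfType) (q : {poly int}) :
  map_poly (real_complex R) (map_poly intr q) = map_poly intr q.
Proof. by rewrite -map_poly_comp; apply: eq_map_poly => c /=; rewrite rmorph_int. Qed.

Lemma prod_horner_real_roots_int (R : rcfType) (p q : {poly int}) (rs : seq R) :
  p \is monic -> (1 < size p)%N ->
  map_poly intr p = \prod_(x <- rs) ('X - x%:P) ->
  exists z : int, \prod_(x <- rs) (map_poly intr q).[x] = z%:~R.
Proof.
move=> p_monic p_gt1 p_split; have [z hz] := prod_horner_roots_int q p_monic p_gt1.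
exists z; apply: (fmorph_inj (real_complex R)); rewrite rmorph_int rmorph_prod /=.
rewrite -(hz _ (map (real_complex R) rs)); last first.
  rewrite -map_poly_real_complex_intr p_split rmorph_prod big_map.
  by apply: eq_bigr => x _; exact: map_polyXsubC.
by rewrite big_map; apply: eq_bigr => x _; rewrite -horner_map map_poly_real_complex_intr.
Qed.

Lemma split_real_roots (R : rcfType) (kappa : R) (p : {poly int}) : p \is monic ->
  (forall z : R[i], root (map_poly intr p) z ->
     complex.Im z = 0 /\ - kappa <= complex.Re z <= kappa) ->
  exists2 rs : seq R, map_poly intr p = \prod_(x <- rs) ('X - x%:P) &
     forall x, x \in rs -> - kappa <= x <= kappa.
Proof.
move=> p_monic p_roots.
have [r p_split] := closed_field_poly_normal (map_poly intr p : {poly R[i]}).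
rewrite (monicP (monic_map _ p_monic)) scale1r in p_split.
have r_real z : z \in r -> complex.Im z = 0 /\ - kappa <= complex.Re z <= kappa.
  by move=> zr; apply: p_roots; rewrite p_split root_prod_XsubC.
exists (map (@complex.Re R) r); last by move=> x /mapP[z /r_real[] _ ? ->].
apply: (map_poly_inj (real_complex R)).
rewrite map_poly_real_complex_intr p_split rmorph_prod big_map.
apply: eq_big_seq => z zr /=; rewrite map_polyXsubC; congr (_ - _%:P).
by have [] := r_real z zr; case: z {zr} => a b /= ->.
Qed.

Lemma deriv_neq0 (R : numDomainType) (p : {poly R}) : (1 < size p)%N -> p^`() != 0.
Proof.
move=> p_gt1; apply/eqP => p'0; have := coef_deriv p (size p).-2.
have -> : (size p).-2.+1 = (size p).-1 by case: (size p) p_gt1 => [|[|k]].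
rewrite -lead_coefE p'0 coef0 => /esym/eqP.
rewrite mulrn_eq0 lead_coef_eq0 -size_poly_eq0.
by case: (size p) p_gt1 => [|[|k]].
Qed.

Lemma irreducible_deriv_root_neq0 (R : numDomainType) (p : {poly int}) (x : R) :
  irreducible_poly p -> root (map_poly intr p) x -> (map_poly intr p^`()).[x] != 0.
Proof.
move=> p_irr px; have p_gt1 := p_irr.1; have p'_neq0 := deriv_neq0 p_gt1.
have [p'_gt1|p'_le1] := ltnP 1 (size p^`()); last first.
  by rewrite [p^`()]size1_polyC // map_polyC hornerC intr_eq0 -polyC_eq0 -size1_polyC.
apply/negP => /eqP p'x.
have [[u v] _ res_eq] := resultant_in_ideal p_gt1 p'_gt1.
have /eqP : (resultant p p^`())%:~R = 0 :> R.
  have := congr1 (fun P => (map_poly intr P).[x]) res_eq.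
  rewrite /= rmorphD !rmorphM /= map_polyC hornerC hornerD !hornerM p'x.
  by move: px => /rootP ->; rewrite !mulr0 addr0.
rewrite intr_eq0 resultant_eq0 => gcd_gt1.
have gcd_p : gcdp p p^`() %= p.
  by apply: p_irr.2; [rewrite neq_ltn gcd_gt1 orbT | exact: dvdp_gcdl].
have /(dvdp_leq p'_neq0) : p %| p^`() by rewrite -(eqp_dvdl _ gcd_p) dvdp_gcdr.
by rewrite leqNgt lt_size_deriv // -size_poly_gt0 (ltn_trans _ p_gt1).
Qed.

Lemma deriv_prod_XsubC_root (R : idomainType) (rs : seq R) x : x \in rs ->
  (\prod_(y <- rs) ('X - y%:P))^`().[x] = \prod_(y <- rem x rs) (x - y).
Proof.
move=> xr; rewrite (big_rem x) //= derivM derivXsubC hornerD !hornerM.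
rewrite hornerC mul1r hornerXsubC subrr mul0r addr0 horner_prod.
by apply: eq_bigr => y _; rewrite hornerXsubC.
Qed.

Lemma rem_notin_uniq (T : eqType) (s : seq T) :
  (forall x, x \in s -> x \notin rem x s) -> uniq s.
Proof.
elim: s => //= y s IH notin_rem; apply/andP; split.
  by have := notin_rem y; rewrite inE eqxx /=; apply.
apply: IH => x xs; have := notin_rem x; rewrite inE xs orbT /=.
case: eqP => [_ | _]; first by move/(_ isT); rewrite xs.
by move/(_ isT); rewrite inE negb_or => /andP[].
Qed.

Lemma separable_prod_XsubC_uniq (R : idomainType) (rs : seq R) :
  (forall x, x \in rs -> (\prod_(y <- rs) ('X - y%:P))^`().[x] != 0) -> uniq rs.
Proof.
move=> sep; apply: rem_notin_uniq => x xr; have := sep x xr.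
by rewrite deriv_prod_XsubC_root //; apply: contra => xx; rewrite (big_rem x) //= subrr mul0r.
Qed.

Lemma deriv_prod_XsubC_uniq (R : idomainType) (rs : seq R) x : uniq rs -> x \in rs ->
  (\prod_(y <- rs) ('X - y%:P))^`().[x] = \prod_(y <- rs | y != x) (x - y).
Proof.
by move=> rs_uniq xr; rewrite deriv_prod_XsubC_root // rem_filter // big_filter.
Qed.

Definition prod_diff (R : pzRingType) (rs : seq R) :=
  \prod_(x <- rs) \prod_(y <- rs | y != x) (x - y).

Lemma count_predD1 (T : eqType) (P : pred T) (s : seq T) x : uniq s -> x \in s -> P x ->
  count (fun y => (y != x) && P y) s = (count P s).-1.
Proof.
move=> s_uniq xs Px; have := count_rem x P s; rewrite xs Px subn1 => <-.
by rewrite rem_filter // count_filter; apply: eq_count => y; rewrite andbC.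
Qed.

Section ProdDiffBound.
Variables (R : realFieldType) (kappa zeta a : R) (rs : seq R).
Hypotheses (rs_uniq : uniq rs) (rs_bounded : forall x, x \in rs -> - kappa <= x <= kappa).
Hypotheses (zeta_ge0 : 0 <= zeta) (kappa_ge : 1 <= 2 * kappa).

Let J x := a <= x <= a + zeta.
Let m := count J rs.
Let K := 2 * kappa.

Lemma norm_prod_diff_root_le x : x \in rs ->
  \prod_(y <- rs | y != x) `|x - y| <= K ^+ size rs * zeta ^+ (if J x then m.-1 else 0).
Proof.
move=> xr; have K_ge0 : 0 <= K by apply: le_trans kappa_ge.
apply: (@le_trans _ _ (\prod_(y <- rs | y != x) (K * zeta ^+ (J x && J y)))).
  rewrite big_seq_cond [X in _ <= X]big_seq_cond.
  apply: ler_prod => y /andP[yr _]; rewrite normr_ge0 /=.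
  have /andP[? ?] := rs_bounded xr; have /andP[? ?] := rs_bounded yr.
  case Jxy: (J x && J y); move: Jxy; rewrite /J /K.
    move=> /andP[/andP[? ?] /andP[? ?]]; rewrite expr1.
    by apply: (@le_trans _ _ zeta); [rewrite ler_norml; lra | rewrite ler_peMl].
  by rewrite expr0 mulr1 ler_norml => _; apply/andP; split; lra.
rewrite big_split /= big_const_seq iter_mulr_1.
apply: ler_pM; rewrite ?exprn_ge0 ?ler_weXn2l ?count_size //.
  by apply: prodr_ge0 => y _; exact: exprn_ge0.
have -> : \prod_(y <- rs | y != x) zeta ^+ (J x && J y) =
          \prod_(y <- rs | (y != x) && (J x && J y)) zeta.
  by rewrite big_mkcondr; apply: eq_bigr => y _; case: (J x && J y).
rewrite big_const_seq iter_mulr_1; case Jx: (J x).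
  by rewrite (count_predD1 rs_uniq xr Jx).
by rewrite (@eq_count _ _ pred0) ?count_pred0 // => y; rewrite andbF.
Qed.

Lemma norm_prod_diff_le : `|prod_diff rs| <= K ^+ (size rs * size rs) * zeta ^+ (m * m.-1).
Proof.
rewrite normr_prod; under eq_bigr do rewrite normr_prod.
rewrite big_seq [X in _ <= X](_ : _ =
    \prod_(x <- rs | x \in rs) (K ^+ size rs * zeta ^+ (if J x then m.-1 else 0))).
  apply: ler_prod => x xr; rewrite norm_prod_diff_root_le // andbT.
  by apply: prodr_ge0 => y _; exact: normr_ge0.
rewrite -big_seq big_split /= big_const_seq iter_mulr_1 count_predT -exprM prodrXr.
by rewrite -big_mkcond /= big_const_seq iter_addn_0 mulnC.
Qed.

End ProdDiffBound.

Lemma prod_diff_real_roots (R : rcfType) (p : {poly int}) (rs : seq R) :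
  p \is monic -> irreducible_poly p -> map_poly intr p = \prod_(x <- rs) ('X - x%:P) ->
  uniq rs /\ 1 <= `|prod_diff rs|.
Proof.
move=> p_monic p_irr p_split.
have p'_neq0 x : x \in rs -> (\prod_(y <- rs) ('X - y%:P))^`().[x] != 0.
  move=> xr; rewrite -p_split deriv_map irreducible_deriv_root_neq0 //.
  by rewrite p_split root_prod_XsubC.
have rs_uniq := separable_prod_XsubC_uniq p'_neq0; split => //.
have prod_p' : prod_diff rs = \prod_(x <- rs) (map_poly intr p^`()).[x].
  apply: eq_big_seq => x xr.
  by rewrite -deriv_prod_XsubC_uniq // -p_split deriv_map.
have [z z_eq] := prod_horner_real_roots_int p^`() p_monic p_irr.1 p_split.
have z_neq0 : z%:~R != 0 :> R.
  rewrite -z_eq prodf_seq_neq0.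
  by apply/allP => x xr; rewrite -deriv_map p_split p'_neq0.
by rewrite prod_p' z_eq -intr_norm ler1z -gtz0_ge1 normr_gt0 -(intr_eq0 R).
Qed.

Lemma mul_pred_le_of_pow_ge1 (R : realFieldType) (K zeta : R) (n m N : nat) :
  (0 < n)%N -> 1 <= K -> 0 <= zeta -> K ^+ (N * N) * zeta < 1 ->
  1 <= K ^+ (n * n) * zeta ^+ (m * m.-1) -> (N * m.-1 <= n)%N.
Proof.
move=> n_gt0 K_ge1 zeta_ge0 zetaK_lt1 prod_ge1; rewrite leqNgt; apply/negP => n_lt.
have KN_ge1 : 1 <= K ^+ (N * N) := exprn_ege1 _ K_ge1.
have zeta_le1 : zeta <= 1.
  by apply: ltW; apply: le_lt_trans zetaK_lt1; rewrite ler_peMl.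
have exp_le : (n * n <= m * m.-1 * (N * N))%N.
  apply: (leq_trans (leq_mul (ltnW n_lt) (ltnW n_lt))).
  rewrite mulnACA [X in (_ <= X)%N]mulnC leq_mul2l leq_mul2r.
  by rewrite leq_pred !orbT.
have pow_lt1 : (K ^+ (N * N) * zeta) ^+ (n * n) < 1.
  rewrite exprn_ilt1 ?muln_eq0 ?orbb -?lt0n //.
  by rewrite mulr_ge0 // exprn_ge0 // (le_trans ler01).
suff : 1 <= (K ^+ (N * N) * zeta) ^+ (n * n) by rewrite leNgt pow_lt1.
apply: (le_trans (exprn_ege1 (N * N) prod_ge1)).
rewrite !exprMn -!exprM [(N * N * _)%N]mulnC.
by rewrite ler_wpM2l ?exprn_ge0 ?(le_trans ler01) // ler_wiXn2l.
Qed.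

Lemma size_split_int (R : numDomainType) (p : {poly int}) (rs : seq R) : p \is monic ->
  map_poly intr p = \prod_(x <- rs) ('X - x%:P) -> size rs = (size p).-1.
Proof.
move=> p_monic p_split; have := congr1 (fun q : {poly R} => size q) p_split.
by rewrite size_prod_XsubC size_map_poly_id0 ?(monicP p_monic) ?intr_eq0 // => ->.
Qed.

Local Open Scope classical_set_scope.

Lemma Upsilon_pI_count (R : realType) (p : {poly int}) (a b u : R) (rs : seq R) :
  p \is monic -> uniq rs -> map_poly intr p = \prod_(x <- rs) ('X - x%:P) ->
  Upsilon_pI p a b u -> u = ((count (fun x => a <= x <= b) rs)%:R - 1) / (size rs)%:R.
Proof.
move=> p_monic rs_uniq p_split [s [s_uniq s_roots ->]].
rewrite (size_split_int p_monic p_split) -size_filter; congr ((_%:R - 1) / _).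
apply/perm_size/uniq_perm; rewrite ?filter_uniq // => t.
have rsE : (t \in rs) = root (map_poly intr p) t by rewrite p_split root_prod_XsubC.
rewrite mem_filter rsE.
by apply/idP/andP => [/s_roots[? /rootP] | [? /rootP ?]] //; apply/s_roots.
Qed.

Lemma Upsilon_pI_le (R : realType) (kappa zeta a u : R) (p : {poly int}) (N : nat) :
  in_P kappa p -> Upsilon_pI p a (a + zeta) u ->
  0 <= zeta -> 1 <= 2 * kappa -> (0 < N)%N -> (2 * kappa) ^+ (N * N) * zeta < 1 ->
  u <= N%:R^-1.
Proof.
move=> [p_monic p_irr p_roots] p_Upsilon zeta_ge0 kappa_ge N_gt0 small.
have [rs p_split rs_bounded] := split_real_roots p_monic p_roots.
have [rs_uniq prod_ge1] := prod_diff_real_roots p_monic p_irr p_split.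
rewrite (Upsilon_pI_count p_monic rs_uniq p_split p_Upsilon).
set m := count _ rs; set n := size rs.
have n_gt0 : (0 < n)%N by rewrite /n (size_split_int p_monic p_split) -subn1 subn_gt0 p_irr.1.
have Nm_le : (N * m.-1 <= n)%N.
  apply: (mul_pred_le_of_pow_ge1 n_gt0 kappa_ge zeta_ge0 small).
  exact: le_trans prod_ge1 (norm_prod_diff_le a rs_uniq rs_bounded zeta_ge0 kappa_ge).
apply: (@le_trans _ _ (m.-1%:R / n%:R)).
  rewrite ler_wpM2r ?invr_ge0 ?ler0n //.
  by case: m {Nm_le} => [|m]; rewrite ?sub0r ?lerN10 // -natr1 addrK.
by rewrite ler_pdivrMr ?ltr0n // mulrC ler_pdivlMr ?ltr0n // -natrM ler_nat mulnC.
Qed.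

Lemma Upsilon_set0 (R : realType) (kappa zeta : R) :
  0 <= zeta <= 2 * kappa -> Upsilon_set kappa zeta 0.
Proof.
move=> /andP[zeta_ge0 zeta_le]; exists 'X, (- zeta / 2); split.
- split; first exact: monicX.
    by have := irredp_XsubC (0 : int); rewrite subr0.
  move=> z; rewrite map_polyX => /rootP; rewrite hornerX => ->.
  by split => //=; apply/andP; split; lra.
- by split; lra.
- exists [:: 0]; split => //; last by rewrite size_polyX /= subrr mul0r.
  move=> t; rewrite inE map_polyX hornerX; split; last by case=> _ ->.
  by move/eqP => ->; split => //; apply/andP; split; lra.
Qed.

Lemma Upsilon_le (R : realType) (kappa zeta : R) (N : nat) :
  1 <= 2 * kappa -> 0 <= zeta -> (0 < N)%N -> (2 * kappa) ^+ (N * N) * zeta < 1 ->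
  0 <= Upsilon kappa zeta <= N%:R^-1.
Proof.
move=> kappa_ge zeta_ge0 N_gt0 small.
have zeta_le1 : zeta <= 1.
  by apply: ltW; apply: le_lt_trans small; rewrite ler_peMl // exprn_ege1.
have Upsilon0 : Upsilon_set kappa zeta 0.
  by apply: Upsilon_set0; rewrite zeta_ge0 (le_trans zeta_le1).
have ub : ubound (Upsilon_set kappa zeta) N%:R^-1.
  move=> u [p [a [p_in _ p_Upsilon]]].
  exact: Upsilon_pI_le p_in p_Upsilon zeta_ge0 kappa_ge N_gt0 small.
have ne : Upsilon_set kappa zeta !=set0 by exists 0.
by rewrite (ge_sup ne ub) (sup_upper_bound (conj ne (ex_intro _ _ ub))).
Qed.

Theorem theorem5p4 (R : realType) (kappa : R) (hk : 2 <= kappa) :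
  Upsilon kappa zeta @[zeta --> 0^'+] --> 0.
Proof.
apply/cvgrPdist_le => e e_gt0; have kappa_ge : 1 <= 2 * kappa by lra.
pose N := (Num.truncn e^-1).+1.
have Ne : N%:R^-1 <= e.
  rewrite -[leRHS]invrK lef_pV2 ?posrE ?invr_gt0 ?ltr0n //.
  exact/ltW/truncnS_gt.
have KN_gt0 : 0 < (2 * kappa) ^+ (N * N) by rewrite exprn_gt0 // (lt_le_trans ltr01).
have KN_inv_gt0 : 0 < ((2 * kappa) ^+ (N * N))^-1 by rewrite invr_gt0.
near=> zeta.
have zeta_gt0 : 0 < zeta by near: zeta; exact: nbhs_right_gt.
have small : (2 * kappa) ^+ (N * N) * zeta < 1.
  by rewrite mulrC -ltr_pdivlMr // mul1r; near: zeta; exact: nbhs_right_lt.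
have /andP[Upsilon_ge0 Upsilon_leN] := Upsilon_le kappa_ge (ltW zeta_gt0) (ltn0Sn _) small.
by rewrite sub0r normrN ger0_norm // (le_trans Upsilon_leN).
Unshelve. all: end_near.
Qed.
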